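(* Let $\mathscr{A}\in\mathbb{R}^{n_1\times n_2\times n_3}$, $\mathscr{B}\in\mathbb{R}^{n_1\times s\times n_3}$, and suppose $k$ steps of the tensor tubal-global Golub–Kahan algorithm described in the context have been run (without breakdown). Starting from the zero initial guess, for $\mathscr{Y}\in\mathbb{R}^{k\times1\times n_3}$ let $\mathscr{X}_k=\mathbb{V}_k\star(\mathscr{Y}\circledast\mathscr{I}_{ssn_3})$. Then $$\|\mathscr{B}-\mathscr{A}\star\mathscr{X}_k\|_F=\|\mathscr{E}_1^{(k+1)}\star\mathbf{a}_1-\widetilde{\mathscr{C}}_k\star\mathscr{Y}\|_{T_{\ell_2}}.$$
   Context: All tensors are real third-order arrays; $\|\cdot\|_F$ is the Frobenius norm of the array. $\widehat{\mathscr{A}}=\mathscr{A}\times_3F_{n_3}$ denotes the tensor obtained by applying the discrete Fourier transform ($F_{n_3}$ with entries $\omega^{(i-1)(j-1)}$, $\omega=e^{-2\pi\mathrm{i}/n_3}$) to each tube; its frontal slices $\hat A^{(k)}$ are the Fourier slices. T-product: $\mathscr{A}\star\mathscr{B}$ has Fourier slices $\hat A^{(k)}\hat B^{(k)}$. Transpose $\mathscr{A}^T$: transpose each frontal slice and reverse the order of frontal slices $2,\dots,n_3$. $\mathscr{I}_{ssn_3}$: first frontal slice $I_s$, others zero. T-Kronecker product $\mathscr{A}\circledast\mathscr{B}$: Fourier slices $\hat A^{(k)}\otimes\hat B^{(k)}$. A tube is an element of $\mathbb{R}^{1\times1\times n_3}$; $\mathbf{e}$ has entries $(1,0,\dots,0)$,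 $\mathbf{o}$ is the zero tube. For a tube $\mathbf{a}$, $\mathbf{a}\divideontimes\mathscr{W}$ has $(i,j)$ tube $\mathbf{a}\star\mathscr{W}(i,j,:)$. Normalization of $\mathscr{W}$: $\mathbf{a}$ is the tube with $k$-th Fourier coefficient $\|\hat W^{(k)}\|_F$ (breakdown if one is zero) and $\mathscr{Q}$ has Fourier slices $\hat W^{(k)}/\|\hat W^{(k)}\|_F$; output $[\mathscr{Q},\mathbf{a}]$. Tubal-global Golub–Kahan algorithm: $\mathscr{V}_0=0\in\mathbb{R}^{n_2\times s\times n_3}$, $[\mathscr{U}_1,\mathbf{a}_1]=\mathrm{Normalization}(\mathscr{B})$; for $j=1,\dots,k$: $\widetilde{\mathscr{V}}=\mathscr{A}^T\star\mathscr{U}_j-\mathbf{a}_j\divideontimes\mathscr{V}_{j-1}$, $[\mathscr{V}_j,\mathbf{b}_j]=\mathrm{Normalization}(\widetilde{\mathscr{V}})$, $\widetilde{\mathscr{U}}=\mathscr{A}\star\mathscr{V}_j-\mathbf{b}_j\divideontimes\mathscr{U}_j$, $[\mathscr{U}_{j+1},\mathbf{a}_{j+1}]=\mathrm{Normalization}(\widetilde{\mathscr{U}})$. Notation: $\mathbb{V}_k=[\mathscr{V}_1,\dots,\mathscr{V}_k]\in\mathbb{R}^{n_2\times ks\times n_3}$ (concatenation along mode 2). $\widetilde{\mathscr{C}}_k\in\mathbb{R}^{(k+1)\times k\times n_3}$ is the bidiagonal tensor whose $(j,j)$ tube is $\mathbf{b}_j$, whose $(j+1,j)$ tube is $\mathbf{a}_{j+1}$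 ($j=1,\dots,k$), and other tubes $\mathbf{o}$. $\mathscr{E}_1^{(k+1)}=[\mathbf{e};\mathbf{o};\dots;\mathbf{o}]\in\mathbb{R}^{(k+1)\times1\times n_3}$. T-$\ell_2$ norm of $\mathscr{Y}\in\mathbb{R}^{p\times1\times n_3}$: $\|\mathscr{Y}\|_{T_{\ell_2}}=\frac{1}{\sqrt{n_3}}\big(\sum_{k=1}^{n_3}\|\hat Y^{(k)}\|_2^2\big)^{1/2}$. *)

From HB Require Import structures.
From mathcomp Require Import all_boot all_order all_algebra.
From mathcomp Require Import complex mxtens.
From mathcomp Require Import reals trigo.
Set Implicit Arguments. Unset Strict Implicit. Unset Printing Implicit Defensive.
Import Order.TTheory GRing.Theory Num.Theory.
Local Open Scope ring_scope.
Local Open Scope complex_scope.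

Section Tensors.
Variable R : realType.
Local Notation C := R[i].

(* third-order array m x n x p, stored by frontal slices *)
Definition tensor (T : Type) (m n p : nat) := 'I_p -> 'M[T]_(m, n).

Definition tcplx m n p (A : tensor R m n p) : tensor C m n p :=
  fun l => map_mx (fun x : R => x%:C) (A l).

Definition omega (p : nat) : C :=
  (cos (2 * pi / p%:R)) +i* (- sin (2 * pi / p%:R)).

Definition dft m n p (A : tensor C m n p) : tensor C m n p :=
  fun k => \sum_(j < p) (omega p ^+ (k * j)) *: A j.

Definition idft m n p (H : tensor C m n p) : tensor C m n p :=
  fun j => (p%:R^-1 : C) *: \sum_(k < p) ((omega p)^-1 ^+ (k * j)) *: H k.

Definition tprod m n q p (A : tensor C m n p) (B : tensor C n q p)
  : tensor C m q p := idft (fun k => dft A k *m dft B k).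

(* index reversal of frontal slices 2..p (0-based: j |-> (p - j) mod p) *)
Definition rev_slice p (j : 'I_p) : 'I_p :=
  Ordinal (ltn_pmod (p - j) (leq_ltn_trans (leq0n j) (ltn_ord j))).

Definition ttr m n p (A : tensor C m n p) : tensor C n m p :=
  fun j => (A (rev_slice j))^T.

Definition tid s p : tensor C s s p := fun l => if val l == 0%N then 1%:M else 0.

Definition tkron m1 n1 m2 n2 p (A : tensor C m1 n1 p) (B : tensor C m2 n2 p)
  : tensor C (m1 * m2) (n1 * n2) p :=
  idft (fun k => tensmx (dft A k) (dft B k)).

Definition tube_e p : tensor C 1 1 p := fun l => if val l == 0%N then 1 else 0.

Definition tube_of m n p (W : tensor C m n p) (i : 'I_m) (j : 'I_n)
  : tensor C 1 1 p := fun l => (W l i j)%:M.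

Definition tscale m n p (a : tensor C 1 1 p) (W : tensor C m n p)
  : tensor C m n p :=
  fun l => \matrix_(i, j) (tprod a (tube_of W i j) l 0 0).

Definition abs2 (z : C) : R := (@complex.Re R z) ^+ 2 + (@complex.Im R z) ^+ 2.
Definition frobc m n (M : 'M[C]_(m, n)) : R :=
  Num.sqrt (\sum_(i < m) \sum_(j < n) abs2 (M i j)).

Definition tfrob m n p (T : tensor C m n p) : R :=
  Num.sqrt (\sum_(l < p) \sum_(i < m) \sum_(j < n) abs2 (T l i j)).

Definition tl2 q p (Y : tensor C q 1 p) : R :=
  (Num.sqrt (p%:R))^-1 * Num.sqrt (\sum_(k < p) (frobc (dft Y k)) ^+ 2).

Definition norm_tube m n p (W : tensor C m n p) : tensor C 1 1 p :=
  idft (fun k => ((frobc (dft W k))%:C)%:M).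
Definition norm_Q m n p (W : tensor C m n p) : tensor C m n p :=
  idft (fun k => ((frobc (dft W k))^-1)%:C *: dft W k).

Definition taddsub m n p (X Y : tensor C m n p) : tensor C m n p :=
  fun l => X l - Y l.

(* Tubal-global Golub--Kahan. State after step j (j >= 0):
   (U_{j+1}, a_{j+1}, V_j, b_j); at j = 0, b_0 is an unused zero tube. *)
Record gk_state n1 n2 s p := GKState {
  gkU : tensor C n1 s p; gka : tensor C 1 1 p;
  gkV : tensor C n2 s p; gkb : tensor C 1 1 p }.

Section GK.
Variables (n1 n2 n3 s : nat).
Variables (A : tensor C n1 n2 n3) (B : tensor C n1 s n3).

(* V~ computed at step j from the state after step j-1 *)
Definition gk_Vt (st : gk_state n1 n2 s n3) : tensor C n2 s n3 :=
  taddsub (tprod (ttr A) (gkU st)) (tscale (gka st) (gkV st)).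
Definition gk_Ut (st : gk_state n1 n2 s n3) : tensor C n1 s n3 :=
  let V := norm_Q (gk_Vt st) in let b := norm_tube (gk_Vt st) in
  taddsub (tprod A V) (tscale b (gkU st)).

Definition gk_step (st : gk_state n1 n2 s n3) : gk_state n1 n2 s n3 :=
  let V := norm_Q (gk_Vt st) in let b := norm_tube (gk_Vt st) in
  let Ut := gk_Ut st in
  GKState (norm_Q Ut) (norm_tube Ut) V b.

Fixpoint gk (j : nat) : gk_state n1 n2 s n3 :=
  match j with
  | 0%N => GKState (norm_Q B) (norm_tube B) (fun _ => 0) (fun _ => 0)
  | j'.+1 => gk_step (gk j')
  end.

(* paper indexing, j >= 1 *)
Definition GK_U j := gkU (gk j.-1).
Definition GK_a j := gka (gk j.-1).
Definition GK_V j := gkV (gk j).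
Definition GK_b j := gkb (gk j).

Definition GK_Vtilde j := gk_Vt (gk j.-1).
Definition GK_Utilde j := gk_Ut (gk j.-1).

Definition gk_no_breakdown (k : nat) : Prop :=
  (forall l, frobc (dft B l) != 0) /\
  (forall j, (1 <= j <= k)%N -> forall l,
     frobc (dft (GK_Vtilde j) l) != 0 /\ frobc (dft (GK_Utilde j) l) != 0).

(* V_k = [V_1, ..., V_k] concatenated along mode 2; column (j,a) at j*s+a *)
Definition GK_Vcat k : tensor C n2 (k * s) n3 :=
  fun l => \matrix_(r, c) (GK_V (mxtens_unindex c).1.+1 l r (mxtens_unindex c).2).

(* C~_k : (k+1) x k bidiagonal tensor (0-based indices) *)
Definition GK_Ctilde k : tensor C k.+1 k n3 :=
  fun l => \matrix_(i, j)
    (if val i == val j then GK_b j.+1 l 0 0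
     else if val i == j.+1 then GK_a j.+2 l 0 0 else 0).

Definition E1 k : tensor C k.+1 1 n3 :=
  fun l => \matrix_(i, j) (if val i == 0%N then tube_e l 0 0 else 0).
End GK.

Definition tens_cast m n m' n' p (em : m = m') (en : n = n') (T : tensor C m n p)
  : tensor C m' n' p := fun l => castmx (em, en) (T l).

End Tensors.
Arguments tid {R} s {p}.
Arguments E1 {R n3} k.
Arguments tube_e {R p}.

(* The DFT along tubes turns every t-product into slice-wise
   matrix products, so in each Fourier slice the tubal-global Golub-Kahan
   recurrences become the matrix global Golub-Kahan recurrences
     A V_j = b_j U_j + a_(j+1) U_(j+1),   A^H U_j = b_j V_j + a_j V_(j-1),
   whose coefficients are real (Frobenius norms of the normalized slices).
   They make U_1, ..., U_(k+1) orthonormal for the Frobenius inner product,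
   and B - A X_k = sum_i c_i U_(i+1) with c = a_1 e_1 - C~_k y, so in each slice
   the residual has the norm of c.  Parseval's identity, with its factor n3,
   then sums the slices into the Frobenius norm of the residual tensor on one
   side and into the T-l2 norm of E_1 a_1 - C~_k Y on the other. *)

From HB Require Import structures.
From mathcomp Require Import all_boot all_order all_algebra.
From mathcomp Require Import complex mxtens.
From mathcomp Require Import reals trigo.
From mathcomp Require Import ring lra zify.
Import Order.TTheory GRing.Theory Num.Theory.
Set Implicit Arguments. Unset Strict Implicit. Unset Printing Implicit Defensive.
Local Open Scope ring_scope.
Local Open Scope sesquilinear_scope.

Lemma sum_unity_root_expr (F : fieldType) p (r : F) :
  p.-unity_root r -> \sum_(j < p) r ^+ j = if r == 1 then p%:R else 0.
Proof.
move/unity_rootP=> rp1; have [->|r1] := eqVneq r 1.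
  by rewrite (eq_bigr (fun _ => 1)) ?sumr_const ?card_ord // => j _; rewrite expr1n.
apply: (mulfI (_ : r - 1 != 0)); first by rewrite subr_eq0.
by rewrite -subrX1 rp1 subrr mulr0.
Qed.

Lemma prim_root_neq0 (F : nzRingType) p (z : F) : p.-primitive_root z -> z != 0.
Proof.
move=> zp; apply: contra_eq_neq (prim_expr_order zp) => ->.
by rewrite expr0n gtn_eqF ?(prim_order_gt0 zp) //= eq_sym oner_eq0.
Qed.

Lemma sum_prim_root_ratio (F : fieldType) p (z : F) k q :
  p.-primitive_root z ->
  \sum_(j < p) (z ^+ k / z ^+ q) ^+ j = if k == q %[mod p] then p%:R else 0.
Proof.
move=> zp; have z0 := prim_root_neq0 zp.
rewrite sum_unity_root_expr -?(eq_prim_root_expr zp); last first.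
  apply/unity_rootP; rewrite exprMn exprVn -!exprM !(mulnC _ p) !exprM.
  by rewrite (prim_expr_order zp) !expr1n divr1.
congr (if _ then _ else _); apply/eqP/eqP => [/divr1_eq //|->].
by rewrite divff // expf_neq0.
Qed.

Section RootsOfUnity.
Variable R : realType.
Local Notation w p := (omega R p).
Local Open Scope complex_scope.

Lemma omegaX p r : w p ^+ r =
  cos (r%:R * (2 * pi / p%:R)) +i* - sin (r%:R * (2 * pi / p%:R)).
Proof.
elim: r => [|r IH]; first by rewrite expr0 mul0r cos0 sin0 oppr0.
rewrite exprSr IH /omega; set t := 2 * pi / p%:R.
rewrite -addn1 natrD mulrDl mul1r cosD sinD; apply/eqP.
by rewrite eq_complex /=; apply/andP; split; apply/eqP; ring.
Qed.

Lemma cos_lt1 (x : R) : 0 < x < pi *+ 2 -> cos x < 1.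
Proof.
move=> /andP[x0 x2]; have pi0 : 0 < pi :> R := pi_gt0 R.
rewrite -cos0; have [xpi|pix] := lerP x pi.
  by rewrite ltr_cos // in_itv /=; apply/andP; split => //; lra.
have -> : x = pi *+ 2 - (pi *+ 2 - x) by ring.
rewrite cosB cos2pi sin2pi mul1r mul0r addr0.
by rewrite ltr_cos ?in_itv /=; try (apply/andP; split); lra.
Qed.

Lemma omega_expr_order p : (0 < p)%N -> w p ^+ p = 1.
Proof.
move=> p0; rewrite omegaX mulrCA divff ?pnatr_eq0 -?lt0n // mulr1 mulr_natl.
by rewrite cos2pi sin2pi oppr0.
Qed.

Lemma omega_expr_neq1 p r : (0 < r < p)%N -> w p ^+ r != 1.
Proof.
move=> /andP[r0 rp]; pose t : R := r%:R * (2 * pi / p%:R).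
have pi0 : 0 < pi :> R := pi_gt0 R.
have p0 : 0 < p%:R :> R by rewrite ltr0n; apply: leq_trans rp.
have rp1 : r%:R / p%:R < 1 :> R by rewrite ltr_pdivrMr // mul1r ltr_nat.
have t_in : 0 < t < pi *+ 2.
  have -> : t = r%:R / p%:R * (pi *+ 2) by rewrite /t -mulr_natl; ring.
  have rp0 : 0 < r%:R / p%:R :> R by rewrite divr_gt0 // ltr0n.
  by apply/andP; split; nra.
rewrite omegaX -/t; apply/negP => /eqP[cos_t1 _].
by move: (cos_lt1 t_in); rewrite cos_t1 ltxx.
Qed.

Lemma omega_prim p : (0 < p)%N -> p.-primitive_root (w p).
Proof.
move=> p0; have [q qprim qp] := prim_order_exists p0 (omega_expr_order p0).
have [qltp|pq] := ltnP q p.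
  have := @omega_expr_neq1 p q; rewrite (prim_expr_order qprim) eqxx.
  by rewrite (prim_order_gt0 qprim) qltp => /(_ isT).
have qp_eq : q = p by apply/anti_leq; rewrite pq (dvdn_leq p0 qp).
by move: qprim; rewrite qp_eq.
Qed.

Lemma conj_omega p : ((w p)^*)%R = (w p)^-1.
Proof.
have wJ : w p * (w p)^* = 1.
  rewrite /omega; apply/eqP; rewrite eq_complex /=; apply/andP; split; apply/eqP;
    last by ring.
  by rewrite -[RHS](cos2Dsin2 (2 * pi / p%:R)); ring.
have w0 : w p != 0 by apply: contra_eq_neq wJ => ->; rewrite mul0r eq_sym oner_eq0.
by apply: (mulfI w0); rewrite wJ divff.
Qed.

End RootsOfUnity.

Lemma conjC_real_complex (R : realType) (r : R) : ((r%:C)%C : R[i])^* = (r%:C)%C.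
Proof. exact: conjc_real. Qed.

Definition dotm (R : realType) m n (X Y : 'M[R[i]]_(m, n)) : R[i] :=
  \sum_i \sum_j (X i j)^* * Y i j.

Fact dotm_is_scalar (R : realType) m n (X : 'M[R[i]]_(m, n)) : scalar (dotm X).
Proof.
move=> c Y Z; rewrite /dotm mulr_sumr -big_split; apply: eq_bigr => i _.
by rewrite mulr_sumr -big_split; apply: eq_bigr => j _; rewrite !mxE mulrDr mulrCA.
Qed.

HB.instance Definition _ (R : realType) m n (X : 'M[R[i]]_(m, n)) :=
  GRing.isLinear.Build R[i] 'M[R[i]]_(m, n) R[i] *%R (dotm X) (dotm_is_scalar X).

Section InnerProduct.
Variables (R : realType) (m n : nat).
Local Notation C := R[i].
Implicit Types X Y : 'M[C]_(m, n).

Lemma dotmC X Y : dotm X Y = (dotm Y X)^*.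
Proof.
rewrite /dotm rmorph_sum; apply: eq_bigr => i _.
by rewrite rmorph_sum; apply: eq_bigr => j _; rewrite rmorphM /= conjCK mulrC.
Qed.

Lemma dotmZr c X Y : dotm X (c *: Y) = c * dotm X Y.
Proof. exact: scalarZ. Qed.

Lemma dotmBr X Y1 Y2 : dotm X (Y1 - Y2) = dotm X Y1 - dotm X Y2.
Proof. exact: raddfB. Qed.

Lemma dotm0l Y : dotm 0 Y = 0.
Proof. by rewrite dotmC raddf0 conjC0. Qed.

Lemma dotmZl c X Y : dotm (c *: X) Y = c^* * dotm X Y.
Proof. by rewrite dotmC scalarZ rmorphM /= -dotmC. Qed.

Lemma dotmDl X1 X2 Y : dotm (X1 + X2) Y = dotm X1 Y + dotm X2 Y.
Proof. by rewrite dotmC raddfD rmorphD /= -!dotmC. Qed.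

Lemma dotm_suml I (r : seq I) (P : pred I) (F : I -> 'M[C]_(m, n)) Y :
  dotm (\sum_(q <- r | P q) F q) Y = \sum_(q <- r | P q) dotm (F q) Y.
Proof.
rewrite dotmC (raddf_sum (dotm Y)) rmorph_sum.
by apply: eq_bigr => q _; rewrite [RHS]dotmC.
Qed.

Lemma dotm_mulmxl p (A : 'M[C]_(m, p)) (X : 'M[C]_(p, n)) Y :
  dotm (A *m X) Y = dotm X (A ^t* *m Y).
Proof.
rewrite /dotm.
transitivity (\sum_i \sum_j \sum_r (A i r)^* * (X r j)^* * Y i j).
  apply: eq_bigr => i _; apply: eq_bigr => j _; rewrite mxE rmorph_sum mulr_suml.
  by apply: eq_bigr => r _; rewrite rmorphM.
under eq_bigr do rewrite exchange_big /=.
rewrite exchange_big /=; apply: eq_bigr => r _; rewrite exchange_big /=.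
apply: eq_bigr => j _; rewrite mxE mulr_sumr; apply: eq_bigr => i _.
by rewrite !mxE mulrA (mulrC (A i r)^*).
Qed.

End InnerProduct.

Lemma dotm_mulmxr (R : realType) m n p (A : 'M[R[i]]_(n, m)) (X : 'M[R[i]]_(n, p)) Y :
  dotm X (A *m Y) = dotm (A ^t* *m X) Y.
Proof. by rewrite dotmC dotm_mulmxl -dotmC. Qed.

Section Fourier.
Variable R : realType.
Local Notation C := R[i].
Local Notation w p := (omega R p).

Lemma ord_gt0 p (k : 'I_p) : (0 < p)%N.
Proof. exact: leq_ltn_trans (leq0n k) (ltn_ord k). Qed.

Lemma dftE m n p (T : tensor C m n p) k i j :
  dft T k i j = \sum_(l < p) w p ^+ (k * l) * T l i j.
Proof. by rewrite /dft summxE; apply: eq_bigr => l _; rewrite mxE. Qed.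

Lemma idftE m n p (H : tensor C m n p) l i j :
  idft H l i j = p%:R^-1 * \sum_(k < p) (w p)^-1 ^+ (k * l) * H k i j.
Proof.
by rewrite /idft mxE summxE; congr (_ * _); apply: eq_bigr => k _; rewrite mxE.
Qed.

Lemma sum_dft_kernel p (k q : 'I_p) :
  \sum_(l < p) w p ^+ (k * l) * (w p)^-1 ^+ (q * l) = (k == q)%:R * p%:R.
Proof.
under eq_bigr do rewrite !exprM exprVn -exprMn.
rewrite sum_prim_root_ratio ?omega_prim ?(ord_gt0 k) // !modn_small //.
by rewrite val_eqE; case: (k == q); rewrite ?mul1r ?mul0r.
Qed.

Lemma sum_delta p (k : 'I_p) (F : 'I_p -> C) :
  \sum_(q < p) (k == q)%:R * F q = F k.
Proof.
rewrite (bigD1 k) //= eqxx mul1r big1 ?addr0 // => q qk.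
by rewrite eq_sym (negbTE qk) mul0r.
Qed.

Lemma dft_idft m n p (H : tensor C m n p) k : dft (idft H) k = H k.
Proof.
have p0 : p%:R != 0 :> C by rewrite pnatr_eq0 -lt0n (ord_gt0 k).
apply/matrixP => i j; rewrite dftE.
under eq_bigr do rewrite idftE mulrCA mulr_sumr.
rewrite -mulr_sumr exchange_big /=.
under eq_bigr do under eq_bigr do rewrite mulrA.
under eq_bigr do rewrite -mulr_suml sum_dft_kernel -mulrA.
by rewrite sum_delta mulKf.
Qed.

Lemma parseval_seq p (t : 'I_p -> C) :
  \sum_(k < p) (\sum_(l < p) w p ^+ (k * l) * t l)^* *
                (\sum_(l < p) w p ^+ (k * l) * t l)
  = p%:R * \sum_(l < p) (t l)^* * t l.
Proof.
transitivity (\sum_(l < p) \sum_(l' < p) (t l)^* * t l' *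
                \sum_(k < p) w p ^+ (l' * k) * (w p)^-1 ^+ (l * k)).
  transitivity (\sum_(k < p) \sum_(l < p) \sum_(l' < p)
      (t l)^* * t l' * (w p ^+ (l' * k) * (w p)^-1 ^+ (l * k))).
    apply: eq_bigr => k _; rewrite rmorph_sum mulr_suml; apply: eq_bigr => l _.
    rewrite mulr_sumr; apply: eq_bigr => l' _.
    by rewrite rmorphM rmorphXn /= conj_omega (mulnC l) (mulnC l'); ring.
  rewrite exchange_big; apply: eq_bigr => l _ /=.
  by rewrite exchange_big; apply: eq_bigr => l' _ /=; rewrite mulr_sumr.
rewrite mulr_sumr; apply: eq_bigr => l _.
under eq_bigr do rewrite sum_dft_kernel eq_sym mulrC -mulrA.
exact: sum_delta.
Qed.

End Fourier.

Section Frobenius.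
Variable R : realType.
Local Notation C := R[i].
Local Notation "r %:C" := ((r%:C)%C : C).

Lemma abs2E (z : C) : (abs2 z)%:C = z^* * z.
Proof.
case: z => x y; apply/eqP; rewrite eq_complex /abs2 /=.
by apply/andP; split; apply/eqP; ring.
Qed.

Lemma abs2_ge0 (z : C) : 0 <= abs2 z.
Proof. by rewrite addr_ge0 ?sqr_ge0. Qed.

Lemma frobc_sqr m n (M : 'M[C]_(m, n)) : (frobc M ^+ 2)%:C = dotm M M.
Proof.
rewrite sqr_sqrtr; last by do 2!(apply: sumr_ge0 => ? _); exact: abs2_ge0.
rewrite rmorph_sum; apply: eq_bigr => i _.
by rewrite rmorph_sum; apply: eq_bigr => j _; exact: abs2E.
Qed.

Lemma tfrob_sqr m n p (T : tensor C m n p) :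
  tfrob T ^+ 2 = \sum_(l < p) frobc (T l) ^+ 2.
Proof.
rewrite sqr_sqrtr; last by do 3!(apply: sumr_ge0 => ? _); exact: abs2_ge0.
apply: eq_bigr => l _; rewrite sqr_sqrtr //.
by do 2!(apply: sumr_ge0 => ? _); exact: abs2_ge0.
Qed.

Lemma sum_dotm_dft m n p (T : tensor C m n p) :
  \sum_(k < p) dotm (dft T k) (dft T k) = p%:R * \sum_(l < p) dotm (T l) (T l).
Proof.
rewrite /dotm exchange_big [in RHS]exchange_big mulr_sumr; apply: eq_bigr => i _ /=.
rewrite exchange_big [in RHS]exchange_big mulr_sumr; apply: eq_bigr => j _ /=.
under eq_bigr do rewrite dftE.
exact: parseval_seq.
Qed.

Lemma parseval m n p (T : tensor C m n p) :
  \sum_(k < p) frobc (dft T k) ^+ 2 = p%:R * tfrob T ^+ 2.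
Proof.
apply: (@complexI R); rewrite tfrob_sqr !rmorph_sum rmorphM rmorph_sum rmorph_nat /=.
under eq_bigr do rewrite frobc_sqr.
by rewrite sum_dotm_dft; under [in RHS]eq_bigr do rewrite frobc_sqr.
Qed.

Lemma tfrob_dft m n p (T : tensor C m n p) :
  (Num.sqrt p%:R)^-1 * Num.sqrt (\sum_(k < p) frobc (dft T k) ^+ 2) = tfrob T.
Proof.
case: p T => [|p] T; first by rewrite /tfrob !big_ord0 sqrtr0 mulr0.
rewrite parseval sqrtrM ?ler0n // sqrtr_sqr ger0_norm ?sqrtr_ge0 // mulKf //.
by rewrite sqrtr_eq0 -ltNge ltr0n.
Qed.

End Frobenius.

Section Normalization.
Variables (R : realType) (m n : nat).
Local Notation "r %:C" := ((r%:C)%C : R[i]).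
Variable M : 'M[R[i]]_(m, n).
Hypothesis M_neq0 : frobc M != 0.

Lemma dotm_normalize : dotm ((frobc M)^-1%:C *: M) ((frobc M)^-1%:C *: M) = 1.
Proof.
rewrite dotmZl dotmZr conjC_real_complex -frobc_sqr mulrA -!rmorphM /=.
by rewrite -expr2 -exprMn mulVf // expr1n.
Qed.

Lemma scale_normalize : (frobc M)%:C *: ((frobc M)^-1%:C *: M) = M.
Proof. by rewrite scalerA -rmorphM /= divff // scale1r. Qed.

End Normalization.

Definition orthonormal_on (R : realType) m n (F : nat -> 'M[R[i]]_(m, n)) lo hi :=
  forall i j, (lo <= i <= hi)%N -> (lo <= j <= hi)%N -> dotm (F i) (F j) = (i == j)%:R.

Section Orthonormal.
Variables (R : realType) (m n : nat).
Implicit Types F : nat -> 'M[R[i]]_(m, n).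

Lemma orthonormal_onS F lo hi :
  orthonormal_on F lo hi ->
  (forall i, (lo <= i <= hi)%N -> dotm (F i) (F hi.+1) = 0) ->
  dotm (F hi.+1) (F hi.+1) = 1 -> orthonormal_on F lo hi.+1.
Proof.
move=> onF orth unit i j.
have split_ext x : (lo <= x <= hi.+1)%N -> x = hi.+1 \/ (lo <= x <= hi)%N.
  by case/andP=> lox; rewrite leq_eqVlt => /orP[/eqP|]; [left | right; rewrite lox].
move=> /split_ext[->|hi_i] /split_ext[->|hi_j].
- by rewrite unit eqxx.
- by rewrite dotmC orth // conjC0 gtn_eqF //; case/andP: hi_j.
- by rewrite orth // ltn_eqF //; case/andP: hi_i.
- exact: onF.
Qed.

Lemma dotm_orthonormal_sum K F (c : 'I_K -> R[i]) :
  orthonormal_on F 1 K ->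
  dotm (\sum_(i < K) c i *: F i.+1) (\sum_(i < K) c i *: F i.+1) =
  \sum_(i < K) (c i)^* * c i.
Proof.
move=> onF; rewrite dotm_suml; apply: eq_bigr => i _.
rewrite dotmZl (raddf_sum (dotm (F i.+1))) (bigD1 i) //= big1 => [|j ji].
  by rewrite scalarZ /= onF ?eqxx ?mulr1 ?addr0 // ltn_ord.
by rewrite scalarZ /= onF ?ltn_ord // eqSS val_eqE eq_sym (negbTE ji) mulr0.
Qed.

End Orthonormal.

Section GlobalGolubKahan.
Variables (R : realType) (n1 n2 s k : nat).
Local Notation C := R[i].
Local Notation "r %:C" := ((r%:C)%C : C).
Variables (A : 'M[C]_(n1, n2)) (U : nat -> 'M[C]_(n1, s)) (V : nat -> 'M[C]_(n2, s)).
Variables (a b : nat -> R).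
Hypothesis V0 : V 0 = 0.
Hypothesis U_unit : forall j, (1 <= j <= k.+1)%N -> dotm (U j) (U j) = 1.
Hypothesis V_unit : forall j, (1 <= j <= k)%N -> dotm (V j) (V j) = 1.
Hypothesis adjA_U : forall j, (1 <= j <= k)%N ->
  A ^t* *m U j = (b j)%:C *: V j + (a j)%:C *: V j.-1.
Hypothesis A_V : forall j, (1 <= j <= k)%N ->
  A *m V j = (b j)%:C *: U j + (a j.+1)%:C *: U j.+1.
Hypothesis b_neq0 : forall j, (1 <= j <= k)%N -> b j != 0.
Hypothesis a_neq0 : forall j, (1 <= j <= k)%N -> a j.+1 != 0.

Lemma gk_V_orth_next j : (j < k)%N ->
  orthonormal_on U 1 j.+1 -> orthonormal_on V 1 j ->
  forall i, (1 <= i <= j)%N -> dotm (V i) (V j.+1) = 0.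
Proof.
move=> jk onU onV i ij.
(* b_(j+1) <V_i, V_(j+1)> = <A V_i, U_(j+1)> - a_(j+1) <V_i, V_j>, and both
   terms are a_(j+1) [i = j]. *)
have bV : (b j.+1)%:C *: V j.+1 = A ^t* *m U j.+1 - (a j.+1)%:C *: V j.
  by rewrite adjA_U ?addrK.
apply: (mulfI (_ : (b j.+1)%:C != 0)); first by rewrite fmorph_eq0 b_neq0.
rewrite mulr0 -dotmZr bV dotmBr dotmZr -dotm_mulmxl A_V; last by lia.
rewrite dotmDl !dotmZl !conjC_real_complex onU ?onU ?onV //; try lia.
rewrite (ltn_eqF (_ : i < j.+1)%N) ?mulr0 ?add0r; last by lia.
by rewrite eqSS; case: eqP => [->|_]; rewrite ?subrr // !mulr0 subrr.
Qed.

Lemma gk_U_orth_next j : (1 <= j <= k)%N ->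
  orthonormal_on U 1 j -> orthonormal_on V 1 j ->
  forall i, (1 <= i <= j)%N -> dotm (U i) (U j.+1) = 0.
Proof.
move=> jk onU onV i ij.
(* a_(j+1) <U_i, U_(j+1)> = <A^H U_i, V_j> - b_j <U_i, U_j>, and both terms
   are b_j [i = j]. *)
have aU : (a j.+1)%:C *: U j.+1 = A *m V j - (b j)%:C *: U j.
  by rewrite A_V // addrC addKr.
have Vprev : dotm (V i.-1) (V j) = 0.
  case: i ij => [|[|i]] ij; first by lia.
    by rewrite V0 dotm0l.
  by rewrite onV ?(ltn_eqF (_ : i.+1 < j)%N) //; lia.
apply: (mulfI (_ : (a j.+1)%:C != 0)); first by rewrite fmorph_eq0 a_neq0.
rewrite mulr0 -dotmZr aU dotmBr dotmZr dotm_mulmxr adjA_U; last by lia.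
rewrite dotmDl !dotmZl !conjC_real_complex Vprev mulr0 addr0 onV ?onU //; try lia.
by case: eqP => [->|_]; rewrite ?mulr1 ?mulr0 ?subrr.
Qed.

Lemma gk_orthonormal j : (j <= k)%N -> orthonormal_on U 1 j.+1 /\ orthonormal_on V 1 j.
Proof.
elim: j => [_|j IH jk].
  split=> [i l i1 l1|i l]; last by lia.
  have [-> ->] : i = 1%N /\ l = 1%N by lia.
  by rewrite U_unit.
have [onU onV] := IH (ltnW jk).
have onV' : orthonormal_on V 1 j.+1.
  by apply: orthonormal_onS onV (gk_V_orth_next jk onU onV) (V_unit _); lia.
split=> //; apply: orthonormal_onS onU (gk_U_orth_next _ onU onV') (U_unit _); lia.
Qed.

Definition gk_bidiag : 'M[C]_(k.+1, k) := \matrix_(i, j)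
  (if i == j :> nat then (b j.+1)%:C else if i == j.+1 :> nat then (a j.+2)%:C else 0).

Lemma gk_A_V_bidiag (j : 'I_k) :
  A *m V j.+1 = \sum_(i < k.+1) gk_bidiag i j *: U i.+1.
Proof.
rewrite A_V ?ltn_ord // (bigD1 (widen_ord (leqnSn k) j)) //= (bigD1 (lift ord0 j)) /=.
  rewrite big1 ?addr0 => [|i /andP[i_widen i_lift]].
    by rewrite !mxE lift0 (gtn_eqF (ltnSn j)) !eqxx.
  rewrite mxE (negbTE (i_widen : i != j :> nat)).
  by rewrite (negbTE (i_lift : i != j.+1 :> nat)) scale0r.
by rewrite -val_eqE /= gtn_eqF.
Qed.

Variables (B : 'M[C]_(n1, s)) (y : 'cV[C]_k).
Hypothesis B_U1 : B = (a 1)%:C *: U 1.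

Definition gk_coef : 'cV[C]_k.+1 := (a 1)%:C *: delta_mx 0 0 - gk_bidiag *m y.

Lemma gk_residual :
  B - A *m (\sum_(j < k) y j 0 *: V j.+1) = \sum_(i < k.+1) gk_coef i 0 *: U i.+1.
Proof.
rewrite B_U1 mulmx_sumr.
under eq_bigr do rewrite -scalemxAr gk_A_V_bidiag scaler_sumr.
under [RHS]eq_bigr do rewrite !mxE scalerBl scaler_suml.
rewrite sumrB exchange_big /=; congr (_ - _).
  rewrite big_ord_recl /= mulr1 big1 ?addr0 // => i _.
  by rewrite mulr0 scale0r.
by apply: eq_bigr => i _; apply: eq_bigr => j _; rewrite scalerA mulrC.
Qed.

Lemma gk_residual_dotm (X := \sum_(j < k) y j 0 *: V j.+1) :
  dotm (B - A *m X) (B - A *m X) = dotm gk_coef gk_coef.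
Proof.
rewrite gk_residual dotm_orthonormal_sum; last exact: (gk_orthonormal (leqnn k)).1.
by apply: eq_bigr => i _; rewrite big_ord1.
Qed.

End GlobalGolubKahan.

Section TensorDFT.
Variable R : realType.
Local Notation C := R[i].
Local Notation "r %:C" := ((r%:C)%C : C).
Local Notation w p := (omega R p).

Lemma dft_tprod m n q p (X : tensor C m n p) (Y : tensor C n q p) k :
  dft (tprod X Y) k = dft X k *m dft Y k.
Proof. exact: dft_idft. Qed.

Lemma dft_tkron m1 n1 m2 n2 p (X : tensor C m1 n1 p) (Y : tensor C m2 n2 p) k :
  dft (tkron X Y) k = dft X k *t dft Y k.
Proof. exact: dft_idft. Qed.

Lemma dft_norm_tube m n p (W : tensor C m n p) k :
  dft (norm_tube W) k = (frobc (dft W k))%:C%:M.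
Proof. exact: dft_idft. Qed.

Lemma dft_norm_Q m n p (W : tensor C m n p) k :
  dft (norm_Q W) k = (frobc (dft W k))^-1%:C *: dft W k.
Proof. exact: dft_idft. Qed.

Lemma dft_taddsub m n p (X Y : tensor C m n p) k :
  dft (taddsub X Y) k = dft X k - dft Y k.
Proof. by rewrite /dft -sumrB; apply: eq_bigr => j _; rewrite scalerBr. Qed.

Lemma dft_tscale m n p (x : tensor C 1 1 p) (W : tensor C m n p) k :
  dft (tscale x W) k = dft x k 0 0 *: dft W k.
Proof.
apply/matrixP => i j; rewrite dftE [RHS]mxE.
under eq_bigr do rewrite mxE.
rewrite -(dftE (tprod x (tube_of W i j))) dft_tprod mxE big_ord1; congr (_ * _).
by rewrite !dftE; apply: eq_bigr => l _; rewrite mxE.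
Qed.

Lemma dft_tens_cast m n m' n' p (em : m = m') (en : n = n') (T : tensor C m n p) k :
  dft (tens_cast em en T) k = castmx (em, en) (dft T k).
Proof.
apply/matrixP => i j; rewrite castmxE !dftE; apply: eq_bigr => l _.
by rewrite /tens_cast castmxE.
Qed.

Lemma dft_impulse m n p (M : 'M[C]_(m, n)) k :
  dft (fun l : 'I_p => if val l == 0%N then M else 0) k = M.
Proof.
rewrite /dft (bigD1 (Ordinal (ord_gt0 k))) //= big1 ?addr0 => [|l l0].
  by rewrite muln0 expr0 scale1r.
by rewrite ifF ?scaler0 //; apply/negbTE; move: l0; rewrite -val_eqE.
Qed.

Lemma rev_sliceK p : involutive (@rev_slice p).
Proof.
move=> j; apply: val_inj => /=; have jp := ltn_ord j.
have [->|j0] := posnP j; first by rewrite subn0 modnn subn0 modnn.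
by rewrite (@modn_small (p - j)) ?subKn ?modn_small //; lia.
Qed.

Lemma omega_rev_slice p k (l : 'I_p) : w p ^+ (k * rev_slice l) = (w p)^-1 ^+ (k * l).
Proof.
have wp := omega_prim R (ord_gt0 l).
have wkl0 : w p ^+ (k * l) != 0 by rewrite expf_neq0 // (prim_root_neq0 wp).
apply: (mulIf wkl0); rewrite exprVn mulVf // -exprD -mulnDr mulnC exprM.
suff -> : w p ^+ (rev_slice l + l) = 1 by rewrite expr1n.
apply/eqP; rewrite -(prim_order_dvd wp) /dvdn /= modnDml subnK ?modnn //.
exact: ltnW.
Qed.

(* Reversing the slices of a real tensor conjugates its Fourier slices. *)
Lemma dft_ttr m n p (A : tensor R m n p) k :
  dft (ttr (tcplx A)) k = (dft (tcplx A) k) ^t*.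
Proof.
apply/matrixP => i j; rewrite dftE !mxE dftE rmorph_sum /=.
rewrite (reindex_inj (inv_inj (@rev_sliceK p))) /=; apply: eq_bigr => l _.
rewrite /ttr rev_sliceK omega_rev_slice rmorphM rmorphXn /= conj_omega.
by rewrite !mxE conjC_real_complex.
Qed.

End TensorDFT.

Section Slices.
Variables (R : realType) (n1 n2 n3 s k : nat).
Variables (A : tensor R n1 n2 n3) (B : tensor R n1 s n3).
Local Notation C := R[i].
Local Notation "r %:C" := ((r%:C)%C : C).
Local Notation Ac := (tcplx A).
Local Notation Bc := (tcplx B).

(* The tensor normalized into [U_j, a_j].  Index 0 is junk and repeats
   index 1, as [GK_a] does. *)
Definition GK_Uraw j : tensor C n1 s n3 :=
  if j is j'.+2 then GK_Utilde Ac Bc j'.+1 else Bc.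

Lemma GK_U_normalize j : GK_U Ac Bc j.+1 = norm_Q (GK_Uraw j.+1).
Proof. by case: j. Qed.

Lemma GK_a_normalize j : GK_a Ac Bc j = norm_tube (GK_Uraw j).
Proof. by case: j => [|[]]. Qed.

Variable l : 'I_n3.
Hypothesis no_breakdown : gk_no_breakdown Ac Bc k.

Definition slice_U j := dft (GK_U Ac Bc j) l.
Definition slice_V j := dft (GK_V Ac Bc j) l.
Definition slice_a j := frobc (dft (GK_Uraw j) l).
Definition slice_b j := frobc (dft (GK_Vtilde Ac Bc j) l).
Local Notation Ah := (dft Ac l).

Lemma slice_a_neq0 j : (1 <= j <= k.+1)%N -> slice_a j != 0.
Proof.
case: j => [|[|j]] //= jk; first exact: no_breakdown.1.
by have [_ ->] := no_breakdown.2 j.+1 jk l.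
Qed.

Lemma slice_b_neq0 j : (1 <= j <= k)%N -> slice_b j != 0.
Proof. by move=> jk; have [-> _] := no_breakdown.2 j jk l. Qed.

Lemma dft_GK_a j : dft (GK_a Ac Bc j) l 0 0 = (slice_a j)%:C.
Proof. by rewrite GK_a_normalize dft_norm_tube mxE mulr1n. Qed.

Lemma dft_GK_b j : dft (GK_b Ac Bc j.+1) l 0 0 = (slice_b j.+1)%:C.
Proof. by rewrite (dft_norm_tube (GK_Vtilde Ac Bc j.+1)) mxE mulr1n. Qed.

Lemma slice_U_def j : slice_U j.+1 = (slice_a j.+1)^-1%:C *: dft (GK_Uraw j.+1) l.
Proof. by rewrite /slice_U GK_U_normalize dft_norm_Q. Qed.

Lemma slice_V_def j :
  slice_V j.+1 = (slice_b j.+1)^-1%:C *: dft (GK_Vtilde Ac Bc j.+1) l.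
Proof. exact: dft_norm_Q. Qed.

Lemma slice_V0 : slice_V 0 = 0.
Proof. by rewrite /slice_V /dft big1 // => j _; rewrite scaler0. Qed.

Lemma slice_U_unit j : (1 <= j <= k.+1)%N -> dotm (slice_U j) (slice_U j) = 1.
Proof.
by case: j => [//|j] jk; rewrite slice_U_def dotm_normalize // slice_a_neq0.
Qed.

Lemma slice_V_unit j : (1 <= j <= k)%N -> dotm (slice_V j) (slice_V j) = 1.
Proof.
by case: j => [//|j] jk; rewrite slice_V_def dotm_normalize // slice_b_neq0.
Qed.

Lemma slice_U_scale j : (1 <= j <= k.+1)%N ->
  (slice_a j)%:C *: slice_U j = dft (GK_Uraw j) l.
Proof.
case: j => [//|j] jk; rewrite slice_U_def.
exact/scale_normalize/slice_a_neq0.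
Qed.

Lemma slice_V_scale j : (1 <= j <= k)%N ->
  (slice_b j)%:C *: slice_V j = dft (GK_Vtilde Ac Bc j) l.
Proof.
case: j => [//|j] jk; rewrite slice_V_def.
exact/scale_normalize/slice_b_neq0.
Qed.

Lemma slice_adjA_U j : (1 <= j <= k)%N ->
  Ah ^t* *m slice_U j = (slice_b j)%:C *: slice_V j + (slice_a j)%:C *: slice_V j.-1.
Proof.
case: j => [//|j] jk; rewrite slice_V_scale //.
by rewrite dft_taddsub dft_tprod dft_ttr dft_tscale dft_GK_a subrK.
Qed.

Lemma slice_A_V j : (1 <= j <= k)%N ->
  Ah *m slice_V j = (slice_b j)%:C *: slice_U j + (slice_a j.+1)%:C *: slice_U j.+1.
Proof.
case: j => [//|j] jk; rewrite slice_U_scale /=; last by lia.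
by rewrite dft_taddsub dft_tprod dft_tscale dft_GK_b addrC subrK.
Qed.

Lemma slice_B : dft Bc l = (slice_a 1)%:C *: slice_U 1.
Proof. by rewrite slice_U_scale. Qed.

End Slices.

Section Residual.
Variables (R : realType) (n1 n2 n3 s k : nat).
Variables (A : tensor R n1 n2 n3) (B : tensor R n1 s n3) (Y : tensor R k 1 n3).
Local Notation C := R[i].
Local Notation Ac := (tcplx A).
Local Notation Bc := (tcplx B).
Variable l : 'I_n3.
Local Notation y := (dft (tcplx Y) l).

Lemma dft_GK_Vcat_mul :
  dft (tens_cast erefl (mul1n s) (tprod (GK_Vcat Ac Bc k) (tkron (tcplx Y) (tid s)))) l
  = \sum_(j < k) y j 0 *: slice_V A B l j.+1.
Proof.
apply/matrixP => r c; rewrite dft_tens_cast castmxE dft_tprod dft_tkron.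
rewrite (_ : dft (tid s) l = 1%:M); last exact: dft_impulse.
rewrite mxE summxE.
have dft_Vcat r' q : dft (GK_Vcat Ac Bc k) l r' q =
    slice_V A B l (mxtens_unindex q).1.+1 r' (mxtens_unindex q).2.
  by rewrite !dftE; apply: eq_bigr => t _; rewrite mxE.
under eq_bigr do rewrite dft_Vcat mxE.
under [RHS]eq_bigr do rewrite mxE.
set c' := cast_ord _ c.
rewrite (ord1 (mxtens_unindex c').1).
have -> : (mxtens_unindex c').2 = c by apply: val_inj; rewrite /= modn_small.
rewrite cast_ord_id (reindex (@mxtens_index k s)); last first.
  by exists (@mxtens_unindex k s) => x _; rewrite (mxtens_indexK, mxtens_unindexK).
under eq_bigr do rewrite mxtens_indexK.
rewrite -(pair_bigA _ (fun (j : 'I_k) (t : 'I_s) =>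
  slice_V A B l j.+1 r t * (y j 0 * 1%:M t c))) /=.
apply: eq_bigr => j _; rewrite (bigD1 c) //= big1 ?addr0 => [|t tc].
  by rewrite mxE eqxx mulr1n mulr1 mulrC.
by rewrite mxE (negbTE tc) mulr0n !mulr0.
Qed.

Lemma dft_GK_Ctilde :
  dft (GK_Ctilde Ac Bc k) l = gk_bidiag k (slice_a A B l) (slice_b A B l).
Proof.
apply/matrixP => i j; rewrite dftE !mxE; under eq_bigr do rewrite mxE.
case: eqP => _; first by rewrite -(dft_GK_b A B l j) dftE.
case: eqP => _; first by rewrite -(dft_GK_a A B l j.+2) dftE.
by rewrite big1 // => t _; rewrite mulr0.
Qed.

Lemma dft_E1 : dft (E1 (R := R) (n3 := n3) k) l = delta_mx 0 0.
Proof.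
apply/matrixP => i j; rewrite dftE !mxE (ord1 j) eqxx andbT.
under eq_bigr do rewrite mxE.
have [->|i0] := eqVneq i 0; last first.
  by rewrite (negbTE (i0 : val i != 0%N)) big1 // => t _; rewrite mulr0.
have /matrixP/(_ 0 0) := dft_impulse (1 : 'M[C]_1) l; rewrite dftE !mxE => <-.
by apply: eq_bigr => t _.
Qed.

Hypothesis no_breakdown : gk_no_breakdown Ac Bc k.

Lemma slice_residual :
  frobc (dft (taddsub Bc (tprod Ac (tens_cast erefl (mul1n s)
    (tprod (GK_Vcat Ac Bc k) (tkron (tcplx Y) (tid s)))))) l) ^+ 2 =
  frobc (dft (taddsub (tprod (E1 k) (GK_a Ac Bc 1))
                      (tprod (GK_Ctilde Ac Bc k) (tcplx Y))) l) ^+ 2.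
Proof.
apply: (@complexI R); rewrite !frobc_sqr !dft_taddsub !dft_tprod.
rewrite dft_GK_Vcat_mul dft_E1 dft_GK_Ctilde [dft (GK_a _ _ 1) l]mx11_scalar.
rewrite dft_GK_a mul_mx_scalar (gk_residual_dotm (U := slice_U A B l)
  (a := slice_a A B l) (b := slice_b A B l) (slice_V0 A B l)) //.
- exact: slice_U_unit.
- exact: slice_V_unit.
- exact: slice_adjA_U.
- exact: slice_A_V.
- exact: slice_b_neq0.
- by move=> j jk; apply: (slice_a_neq0 l no_breakdown); lia.
- exact: (slice_B l no_breakdown).
Qed.

End Residual.

Unset Implicit Arguments.

Theorem proposition14 (R : realType) (n1 n2 n3 s k : nat)
  (A : tensor R n1 n2 n3) (B : tensor R n1 s n3) (Y : tensor R k 1 n3) :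
  gk_no_breakdown (tcplx A) (tcplx B) k ->
  let Ac := tcplx A in let Bc := tcplx B in
  let Xk : tensor R[i] n2 s n3 :=
    tens_cast erefl (mul1n s)
      (tprod (GK_Vcat Ac Bc k) (tkron (tcplx Y) (tid s))) in
  tfrob (taddsub Bc (tprod Ac Xk)) =
  tl2 (taddsub (tprod (E1 k) (GK_a Ac Bc 1))
               (tprod (GK_Ctilde Ac Bc k) (tcplx Y))).
Proof.
move=> no_breakdown /=.
rewrite /tl2 (eq_bigr _ (fun l _ => esym (slice_residual Y l no_breakdown))).
by rewrite tfrob_dft.
Qed.
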